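(* For any ultrafilter $x\in I$, there exists a sequence $\langle x_n:n\in\mathbb{N}\rangle$ of ultrafilters with $x_n\in\overline{L_n}$ for each $n$, such that $x_1\,\tilde{\mid}\,x_2\,\tilde{\mid}\,\cdots$ and $x_n\,\tilde{\mid}\,x$ for every $n$.
   Context: $\mathbb{N}=\{1,2,3,\dots\}$; $\beta\mathbb{N}$ is the set of ultrafilters on $\mathbb{N}$. For $A\subseteq\mathbb{N}$, $\overline{A}=\{x\in\beta\mathbb{N}:A\in x\}$. $P$ is the set of primes, $L_0=\{1\}$, $L_n=\{a_1\cdots a_n:a_i\in P\}$. $I=\bigcap_{i=0}^\infty\overline{\mathbb{N}\setminus L_i}$ (ultrafilters containing none of the $L_i$). For $x,y\in\beta\mathbb{N}$, $x\,\tilde{\mid}\,y$ iff for every $A\in x$ the set $\{k\in\mathbb{N}:\exists a\in A,\ a\mid k\}$ belongs to $y$. *)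

(* Ultrafilters on N = {1,2,3,...} are
   represented as families of subsets (predicates nat -> Prop) of nat that
   contain the set of positive naturals; A \in x is written x A. *)
From mathcomp Require Import all_boot.
Set Implicit Arguments. Unset Strict Implicit. Unset Printing Implicit Defensive.

Definition Npos : nat -> Prop := fun n => 0 < n.

Definition is_ultrafilter (x : (nat -> Prop) -> Prop) : Prop :=
  [/\ x Npos,
      ~ x (fun _ => False),
      (forall A B : nat -> Prop, x A -> (forall n, A n -> B n) -> x B),
      (forall A B : nat -> Prop, x A -> x B -> x (fun n => A n /\ B n))
    & (forall A : nat -> Prop, x A \/ x (fun n => ~ A n))].

Definition L (n : nat) : nat -> Prop :=
  fun k => exists s : seq nat, [/\ size s = n, all prime s & k = \prod_(p <- s) p].

Definition in_I (x : (nat -> Prop) -> Prop) : Prop :=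
  is_ultrafilter x /\ forall i, ~ x (L i).

Definition divup (A : nat -> Prop) : nat -> Prop :=
  fun k => 0 < k /\ exists a, [/\ 0 < a, A a & a %| k].

Definition tdiv (x y : (nat -> Prop) -> Prop) : Prop :=
  forall A : nat -> Prop, x A -> y (divup A).

From mathcomp Require Import all_boot.

(* Let f_n(k) be the product of the first n prime factors of k, counted with
   multiplicity, and let x_n be the image of x under f_n.  Since x lies in I,
   x-almost every k has at least n prime factors, so f_n(k) lies in L_n and x_n
   contains L_n.  As f_n(k) divides both f_(n+1)(k) and k, each x_n divides
   x_(n+1) and x. *)

Definition pushforward (f : nat -> nat) (x : (nat -> Prop) -> Prop) :
  (nat -> Prop) -> Prop := fun A => x (fun k => A (f k)).

Section Ultrafilter.

Context {x : (nat -> Prop) -> Prop} (ux : is_ultrafilter x).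

Lemma ultrafilter_mono {A B : nat -> Prop} :
  x A -> (forall k, A k -> B k) -> x B.
Proof. by case: ux => _ _ mono _ _; apply: mono. Qed.

Lemma ultrafilter_setI {A B : nat -> Prop} :
  x A -> x B -> x (fun k => A k /\ B k).
Proof. by case: ux => _ _ _ meet _; apply: meet. Qed.

Lemma ultrafilter_Npos_sub (A : nat -> Prop) : (forall k, 0 < k -> A k) -> x A.
Proof. by case: ux => xN _ _ _ _; apply: ultrafilter_mono. Qed.

Lemma ultrafilter_avoid_finite {A : nat -> nat -> Prop} :
  (forall i, ~ x (A i)) -> forall n, x (fun k => forall i, i < n -> ~ A i k).
Proof.
move=> notA; have notAC i : x (fun k => ~ A i k).
  by case: ux => _ _ _ _ /(_ (A i)) [/notA|].
elim=> [|n IHn]; first exact: ultrafilter_Npos_sub.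
apply: (ultrafilter_mono (ultrafilter_setI IHn (notAC n))) => k [Hk notAnk] i.
by rewrite ltnS leq_eqVlt => /predU1P [->|/Hk].
Qed.

Lemma pushforward_ultrafilter (f : nat -> nat) :
  x (fun k => 0 < f k) -> is_ultrafilter (pushforward f x).
Proof.
case: ux => _ x0 mono meet total fpos.
split=> // [A B xA AB|A B|A].
- exact: (mono _ _ xA (fun k => AB (f k))).
- exact: meet.
- exact: total.
Qed.

Lemma tdiv_pushforward (f g : nat -> nat) :
  x (fun k => [/\ 0 < f k, 0 < g k & f k %| g k]) ->
  tdiv (pushforward f x) (pushforward g x).
Proof.
move=> fdvdg A xA; apply: (ultrafilter_mono (ultrafilter_setI xA fdvdg)).
by move=> k [Afk [fk0 gk0 fk_dvd]]; split=> //; exists (f k).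
Qed.

End Ultrafilter.

Lemma prod_prime_gt0 (s : seq nat) : all prime s -> 0 < \prod_(p <- s) p.
Proof.
by move=> /allP s_prime; rewrite big_seq prodn_cond_gt0 // => p /s_prime /prime_gt0.
Qed.

Lemma prod_take_dvd (s : seq nat) n : \prod_(p <- take n s) p %| \prod_(p <- s) p.
Proof. by rewrite -[s in X in _ %| X](cat_take_drop n) big_cat dvdn_mulr. Qed.

Definition factor_seq (k : nat) : seq nat :=
  flatten [seq nseq f.2 f.1 | f <- prime_decomp k].

Lemma all_prime_factor_seq k : all prime (factor_seq k).
Proof.
apply/allP => p /flattenP [_ /mapP [[q e] qe_k ->] /nseqP [-> _]].
by case: (mem_prime_decomp qe_k).
Qed.

Lemma prod_factor_seq k : 0 < k -> \prod_(p <- factor_seq k) p = k.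
Proof.
move=> k0; rewrite big_flatten big_map [RHS](prod_prime_decomp k0).
by apply: eq_bigr => -[q e] _; rewrite big_nseq iter_muln_1.
Qed.

Lemma L_size_factor_seq k : 0 < k -> L (size (factor_seq k)) k.
Proof.
by move=> k0; exists (factor_seq k); rewrite all_prime_factor_seq prod_factor_seq.
Qed.

Definition first_factors (n k : nat) : nat := \prod_(p <- take n (factor_seq k)) p.

Lemma all_prime_take_factor_seq n k : all prime (take n (factor_seq k)).
Proof. by apply/allP => p /mem_take; apply/allP/all_prime_factor_seq. Qed.

Lemma first_factors_gt0 n k : 0 < first_factors n k.
Proof. exact/prod_prime_gt0/all_prime_take_factor_seq. Qed.

Lemma first_factors_dvd n k : 0 < k -> first_factors n k %| k.
Proof. by move=> k0; rewrite -[X in _ %| X]prod_factor_seq ?prod_take_dvd. Qed.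

Lemma first_factors_dvdS n k : first_factors n k %| first_factors n.+1 k.
Proof. by rewrite /first_factors -(take_takel _ (leqnSn n)) prod_take_dvd. Qed.

Lemma L_first_factors n k : n <= size (factor_seq k) -> L n (first_factors n k).
Proof.
move=> n_le; exists (take n (factor_seq k)).
by rewrite size_takel ?all_prime_take_factor_seq.
Qed.

Lemma in_I_many_factors {x : (nat -> Prop) -> Prop} (n : nat) :
  in_I x -> x (fun k => n <= size (factor_seq k)).
Proof.
case=> ux notL; have [xN _ _ _ _] := ux.
apply: (ultrafilter_mono ux (ultrafilter_setI ux xN (ultrafilter_avoid_finite ux notL n))).
move=> k [k0 notLk]; rewrite leqNgt; apply/negP => /notLk; apply.
exact: L_size_factor_seq.
Qed.

Theorem corollary3p6 (x : (nat -> Prop) -> Prop) :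
  in_I x ->
  exists xs : nat -> ((nat -> Prop) -> Prop),
    (forall n, 0 < n -> is_ultrafilter (xs n) /\ xs n (L n)) /\
    (forall n, 0 < n -> tdiv (xs n) (xs n.+1)) /\
    (forall n, 0 < n -> tdiv (xs n) x).
Proof.
move=> xI; have ux : is_ultrafilter x by case: xI.
exists (fun n => pushforward (first_factors n) x); split; [|split] => n _.
- split; last by apply: (ultrafilter_mono ux (in_I_many_factors n xI)) => k /L_first_factors.
  apply: (pushforward_ultrafilter ux); apply: (ultrafilter_Npos_sub ux) => k _.
  exact: first_factors_gt0.
- apply: (tdiv_pushforward ux); apply: (ultrafilter_Npos_sub ux) => k _.
  by rewrite !first_factors_gt0 first_factors_dvdS.
- change (tdiv (pushforward (first_factors n) x) (pushforward id x)).
  apply: (tdiv_pushforward ux); apply: (ultrafilter_Npos_sub ux) => k k0.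
  by rewrite first_factors_gt0 k0 first_factors_dvd.
Qed.
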